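(* Let $(a_i)_{i\ge1},(b_i)_{i\ge1}$ be positive reals, let $V_i\sim\mathrm{Beta}(a_i,b_i)$ be independent, and let $\Pi$ be the law of $\mathbf p=(p_i)_{i\ge1}$ with $p_1=V_1$, $p_i=V_i\prod_{l<i}(1-V_l)$. Then for every $\epsilon>0$ and every $\mathbf p^*\in\mathcal S$, $$\Pi\big(\mathbf p:\ \|\mathbf p^*-\mathbf p\|_1<\epsilon\big)>0,$$ where $\|\mathbf p^*-\mathbf p\|_1=\sum_{i\ge1}|p^*_i-p_i|$.
   Context: $\mathcal S=\{\mathbf p=(p_i)_{i\ge1}:\ \sum_{i\ge1}p_i=1,\ p_i>0\ \forall i\ge1\}$ is the infinite-dimensional open simplex. *)

From HB Require Import structures.
From mathcomp Require Import all_boot all_order all_algebra.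
From mathcomp Require Import all_classical all_reals all_analysis.
Set Implicit Arguments.
Unset Strict Implicit.
Unset Printing Implicit Defensive.
Import Order.TTheory GRing.Theory Num.Theory.
Local Open Scope classical_set_scope.
Local Open Scope ring_scope.

Definition beta_density {R : realType} (a b : R) (x : R) : R :=
  x `^ (a - 1) * (1 - x) `^ (b - 1).

Definition has_beta_law {d} {T : measurableType d} {R : realType}
    (P : probability T R) (V : T -> R) (a b : R) : Prop :=
  forall A : set R, measurable A ->
    P (V @^-1` A) =
      ((\int[lebesgue_measure]_(x in A `&` `]0%R, 1%R[) (beta_density a b x)%:E) *
       ((\int[lebesgue_measure]_(x in `]0%R, 1%R[) (beta_density a b x)%:E)^-1))%E.

Definition mutually_independent {d} {T : measurableType d} {R : realType}
    (P : probability T R) (V : nat -> T -> R) : Prop :=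
  forall (I : seq nat) (B : nat -> set R),
    uniq I -> (forall i, measurable (B i)) ->
    P (\bigcap_(i in [set` I]) (V i @^-1` B i)) =
      (\prod_(i <- I) P (V i @^-1` B i))%E.

(* Stick-breaking weights: p_i = V_i * prod_{l<i} (1 - V_l)  (indices from 0). *)
Definition stick_breaking {T} {R : realType} (V : nat -> T -> R) (w : T) (i : nat) : R :=
  V i w * \prod_(l < i) (1 - V l w).

Definition open_simplex {R : realType} : set (nat -> R) :=
  [set p | (forall i, 0 < p i) /\ (\sum_(i <oo) (p i)%:E)%E = 1%E].

(* l1 distance (as an extended real, always well defined). *)
Definition l1_dist {R : realType} (p q : nat -> R) : \bar R :=
  (\sum_(i <oo) (`|p i - q i|)%:E)%E.

(* Write p* as the stick-breaking image of fractions v_i in ]0, 1[, with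
   v_i = p*_i / (1 - sum_{l<i} p*_l).  For fractions in [0, 1] the weights
   v_i prod_{l<i} (1 - v_l) move by at most sum_{l<=i} |v_l - x_l| when v is
   replaced by x, and the weights past N add up to at most the remaining stick
   prod_{l<N} (1 - v_l).  Choose N with remaining stick of p* below eps/4; then
   every x in [0, 1]^oo with |x_l - v_l| < eps/(2(N+1)^2) for l < N is within
   l1 distance eps.  The event that V_0, ..., V_{N-1} land in these windows has
   positive probability by independence, since a Beta density is bounded below
   on compact subintervals of ]0, 1[, and almost surely every V_i lies in ]0, 1[. *)

From HB Require Import structures.
From mathcomp Require Import all_boot all_order all_algebra.
From mathcomp Require Import all_classical all_reals all_analysis.
From mathcomp Require Import measurable_realfun.
From mathcomp Require Import ring lra.
Set Implicit Arguments.
Unset Strict Implicit.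
Unset Printing Implicit Defensive.
Import Order.TTheory GRing.Theory Num.Theory.
Local Open Scope classical_set_scope.
Local Open Scope ring_scope.

Section StickBreaking.
Variable R : realFieldType.
Implicit Types (v x : nat -> R).

Definition stick v (i : nat) : R := v i * \prod_(l < i) (1 - v l).

Lemma sum_stick v n : \sum_(i < n) stick v i = 1 - \prod_(l < n) (1 - v l).
Proof.
elim: n => [|n IH]; first by rewrite !big_ord0 subrr.
by rewrite !big_ord_recr /= IH /stick; ring.
Qed.

Lemma ler_sum_ord_widen (f : nat -> R) m n : (forall i, 0 <= f i) -> (m <= n)%N ->
  \sum_(i < m) f i <= \sum_(i < n) f i.
Proof.
move=> f0 mn; rewrite -!(big_mkord xpredT) (big_cat_nat (leq0n m) mn) /= lerDl.
exact: sumr_ge0.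
Qed.

Lemma onem_itv01 (y : R) : y \in `[0, 1] -> 1 - y \in `[0, 1].
Proof. by rewrite !in_itv /= => /andP[? ?]; apply/andP; split; lra. Qed.

Lemma prodr_itv01 (I : Type) (r : seq I) (P : pred I) (F : I -> R) :
  (forall i, P i -> F i \in `[0, 1]) -> \prod_(i <- r | P i) F i \in `[0, 1].
Proof.
move=> F01; apply: (big_ind (fun y => y \in `[0, 1])) => //.
  by rewrite in_itv /= ler01 lexx.
move=> y z; rewrite !in_itv /= => /andP[y0 y1] /andP[z0 z1].
by rewrite mulr_ge0 //= mulr_ile1.
Qed.

Lemma ler_distM_itv01 (y z u w : R) :
  y \in `[0, 1] -> z \in `[0, 1] -> u \in `[0, 1] -> w \in `[0, 1] ->
  `|y * u - z * w| <= `|y - z| + `|u - w|.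
Proof.
rewrite !in_itv /= => /andP[y0 y1] /andP[z0 z1] /andP[u0 u1] /andP[w0 w1].
have -> : y * u - z * w = (y - z) * u + z * (u - w) by ring.
apply: le_trans (ler_normD _ _) _; rewrite !normrM (ger0_norm u0) (ger0_norm z0).
by apply: lerD; [rewrite ler_piMr | rewrite ler_piMl].
Qed.

Lemma ler_dist_prod_itv01 n (y z : nat -> R) :
  (forall i, y i \in `[0, 1]) -> (forall i, z i \in `[0, 1]) ->
  `|\prod_(i < n) y i - \prod_(i < n) z i| <= \sum_(i < n) `|y i - z i|.
Proof.
move=> y01 z01; elim: n => [|n IH]; first by rewrite !big_ord0 subrr normr0.
rewrite !big_ord_recr /=.
have prod01 (t : nat -> R) : (forall i, t i \in `[0, 1]) -> \prod_(i < n) t i \in `[0, 1].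
  by move=> t01; apply: prodr_itv01 => i _.
apply: le_trans (ler_distM_itv01 (prod01 _ y01) (prod01 _ z01) (y01 n) (z01 n)) _.
by rewrite lerD2r.
Qed.

Lemma prod_onem_itv01 n (y : nat -> R) : (forall l, y l \in `[0, 1]) ->
  \prod_(l < n) (1 - y l) \in `[0, 1].
Proof. by move=> y01; apply: prodr_itv01 => l _; exact: onem_itv01. Qed.

Lemma ler_dist_prod_onem n v x :
  (forall l, v l \in `[0, 1]) -> (forall l, x l \in `[0, 1]) ->
  `|\prod_(l < n) (1 - v l) - \prod_(l < n) (1 - x l)| <= \sum_(l < n) `|v l - x l|.
Proof.
move=> v01 x01; apply: le_trans (ler_dist_prod_itv01 n (fun l => onem_itv01 (v01 l))
  (fun l => onem_itv01 (x01 l))) _.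
apply: ler_sum => l _; have -> : 1 - v l - (1 - x l) = x l - v l by ring.
by rewrite distrC.
Qed.

Lemma stick_ge0 v i : (forall l, v l \in `[0, 1]) -> 0 <= stick v i.
Proof.
move=> v01; have := v01 i; have := prod_onem_itv01 i v01; rewrite !in_itv /=.
by move=> /andP[? _] /andP[? _]; exact: mulr_ge0.
Qed.

Lemma ler_dist_stick v x i :
  (forall l, v l \in `[0, 1]) -> (forall l, x l \in `[0, 1]) ->
  `|stick v i - stick x i| <= \sum_(l < i.+1) `|v l - x l|.
Proof.
move=> v01 x01; rewrite big_ord_recr /= addrC.
apply: le_trans (ler_distM_itv01 (v01 i) (x01 i) (prod_onem_itv01 i v01)
  (prod_onem_itv01 i x01)) _.
by rewrite lerD2l ler_dist_prod_onem.
Qed.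

Lemma sum_stick_tail_le v n m : (forall l, v l \in `[0, 1]) -> (n <= m)%N ->
  \sum_(n <= i < m) stick v i <= \prod_(l < n) (1 - v l).
Proof.
move=> v01 nm; have := sum_stick v m.
rewrite -(big_mkord xpredT) (big_cat_nat (leq0n n) nm) /= big_mkord sum_stick.
by have := prod_onem_itv01 m v01; rewrite in_itv /= => /andP[? _]; lra.
Qed.

Lemma sum_dist_stick_le v x N M :
  (forall l, v l \in `[0, 1]) -> (forall l, x l \in `[0, 1]) ->
  \sum_(i < M) `|stick v i - stick x i| <=
    N.+1%:R * \sum_(l < N) `|v l - x l| + 2 * \prod_(l < N) (1 - v l).
Proof.
move=> v01 x01.
set S := \sum_(l < N) _; set rv := \prod_(l < N) _; set rx := \prod_(l < N) (1 - x l).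
suff sumK : \sum_(i < maxn M N) `|stick v i - stick x i| <= N.+1%:R * S + 2 * rv.
  apply: le_trans sumK.
  exact: (ler_sum_ord_widen (fun i => normr_ge0 (stick v i - stick x i)) (leq_maxl M N)).
rewrite -(big_mkord xpredT (fun i => `|stick v i - stick x i|)).
rewrite (big_cat_nat (leq0n N) (leq_maxr M N)) /= big_mkord.
have head : \sum_(i < N) `|stick v i - stick x i| <= N%:R * S.
  apply: (@le_trans _ _ (\sum_(i < N) S)); last by rewrite sumr_const card_ord mulr_natl.
  apply: ler_sum => i _.
  apply: le_trans (ler_dist_stick i v01 x01)
    (ler_sum_ord_widen (fun l => normr_ge0 (v l - x l)) (ltn_ord i)).
(* Past [N] each sequence carries at most its remaining stick, and the two
   remaining sticks differ by at most [S]. *)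
have tail : \sum_(N <= i < maxn M N) `|stick v i - stick x i| <= rv + rx.
  apply: (@le_trans _ _ (\sum_(N <= i < maxn M N) (stick v i + stick x i))).
    apply: ler_sum => i _; apply: le_trans (ler_normB _ _) _.
    by rewrite !ger0_norm ?stick_ge0.
  by rewrite big_split /= lerD ?sum_stick_tail_le ?leq_maxr.
have : `|rv - rx| <= S by exact: ler_dist_prod_onem.
rewrite ler_norml -addn1 natrD => /andP[rxS _]; lra.
Qed.

End StickBreaking.

Lemma nneseries_le_ub (R : realType) (u : nat -> \bar R) (y : \bar R) :
  (forall n, 0 <= u n)%E -> (forall n, \sum_(i < n) u i <= y)%E ->
  (\sum_(i <oo) u i <= y)%E.
Proof.
move=> u0 uy; apply: lime_le; first exact: is_cvg_nneseries.
by apply: nearW => n; rewrite big_mkord.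
Qed.

Lemma l1_dist_stick_le (R : realType) (v x : nat -> R) N :
  (forall l, v l \in `[0, 1]) -> (forall l, x l \in `[0, 1]) ->
  (l1_dist (stick v) (stick x) <=
    (N.+1%:R * \sum_(l < N) `|v l - x l| + 2 * \prod_(l < N) (1 - v l))%:E)%E.
Proof.
move=> v01 x01; apply: nneseries_le_ub => n; first by rewrite lee_fin.
by rewrite sumEFin lee_fin sum_dist_stick_le.
Qed.

Lemma l1_dist_stick_lt (R : realType) (v x : nat -> R) (N : nat) (eps : R) :
  (forall l, v l \in `[0, 1]) -> (forall l, x l \in `[0, 1]) ->
  \prod_(l < N) (1 - v l) < eps / 4 ->
  (forall l, (l < N)%N -> `|v l - x l| < eps / (2 * N.+1%:R ^+ 2)) ->
  (l1_dist (stick v) (stick x) < eps%:E)%E.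
Proof.
move=> v01 x01 rest_lt close.
apply: le_lt_trans (l1_dist_stick_le N v01 x01) _; rewrite lte_fin.
have := prod_onem_itv01 N v01; rewrite in_itv /= => /andP[rest_ge0 _].
have eps_gt0 : 0 < eps by lra.
set delta := eps / (2 * N.+1%:R ^+ 2) in close.
have delta_gt0 : 0 < delta by rewrite divr_gt0 ?mulr_gt0 ?exprn_gt0.
have sum_le : \sum_(l < N) `|v l - x l| <= N.+1%:R * delta.
  apply: (@le_trans _ _ (\sum_(l < N) delta)).
    by apply: ler_sum => l _; exact/ltW/close.
  by rewrite sumr_const card_ord [X in _ <= X]mulr_natl ler_pMn2l.
have : N.+1%:R * (N.+1%:R * delta) = eps / 2 by rewrite /delta; field.
have : N.+1%:R * \sum_(l < N) `|v l - x l| <= N.+1%:R * (N.+1%:R * delta).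
  by rewrite ler_pM2l ?ltr0Sn.
lra.
Qed.

Section OpenSimplex.
Variable R : realType.
Implicit Types p : nat -> R.

Lemma open_simplex_psum_le1 p n : open_simplex p -> \sum_(i < n) p i <= 1.
Proof.
case=> p0 p1; have := @nneseries_lim_ge R (fun i => (p i)%:E) xpredT 0 n.
rewrite p1 sumEFin lee_fin big_mkord; apply=> i _ _.
by rewrite lee_fin ltW.
Qed.

Lemma open_simplex_tail p e : open_simplex p -> 0 < e ->
  exists N, 1 - \sum_(i < N) p i < e.
Proof.
move=> [p0 p1] e0; apply/not_existsP => small.
have : (\sum_(i <oo) (p i)%:E <= (1 - e)%:E)%E.
  apply: nneseries_le_ub => [i|n]; first by rewrite lee_fin ltW.
  by rewrite sumEFin lee_fin; move/negP: (small n); rewrite -leNgt; lra.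
by rewrite p1 lee_fin; lra.
Qed.

Lemma open_simplex_stick p : open_simplex p ->
  exists2 v, (forall i, v i \in `]0, 1[) & p = stick v.
Proof.
move=> ps; have psum_le1 n := open_simplex_psum_le1 n ps; case: ps => p0 _.
have rest_gt i : p i < 1 - \sum_(l < i) p l.
  by have := psum_le1 i.+2; rewrite !big_ord_recr /=; have := p0 i.+1; lra.
have rest_gt0 i : 0 < 1 - \sum_(l < i) p l by have := rest_gt i; have := p0 i; lra.
pose v i := p i / (1 - \sum_(l < i) p l).
have rest_prod k : \prod_(l < k) (1 - v l) = 1 - \sum_(i < k) p i.
  elim: k => [|k IH]; first by rewrite !big_ord0 subr0.
  rewrite big_ord_recr /= IH big_ord_recr /= /v.
  by field; exact/lt0r_neq0/rest_gt0.
exists v => [i|].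
  by rewrite in_itv /= /v divr_gt0 ?ltr_pdivrMr ?mul1r ?p0 ?rest_gt ?rest_gt0.
apply/funext => i; rewrite /stick rest_prod /v.
by field; exact/lt0r_neq0/rest_gt0.
Qed.

End OpenSimplex.

Section BetaDensity.
Variable R : realType.

Lemma powR_ge_min (c y r : R) : 0 < c -> c <= y -> y <= 1 ->
  Num.min (c `^ r) 1 <= y `^ r.
Proof.
move=> c0 cy y1; have y0 : 0 < y by exact: lt_le_trans cy.
rewrite ge_min; have [r0|r0] := leP 0 r.
  by apply/orP; left; apply: ge0_ler_powR; rewrite // nnegrE ltW.
apply/orP; right; rewrite -[r]opprK powRN invf_ge1 ?powR_gt0 //.
have -> : (1 : R) = 1 `^ (- r) by rewrite powR1.
by apply: ge0_ler_powR; rewrite ?nnegrE; lra.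
Qed.

Lemma beta_density_ge0 (a b y : R) : 0 <= beta_density a b y.
Proof. exact/mulr_ge0/powR_ge0/powR_ge0. Qed.

Lemma measurable_beta_density (a b : R) :
  measurable_fun [set: R] (EFin \o beta_density a b).
Proof.
apply/measurable_EFinP/measurable_funM; first exact: measurable_powR.
apply: (measurableT_comp (measurable_powR _)).
exact/measurable_funB/measurable_id/measurable_cst.
Qed.

Lemma beta_integral_itv_gt0 (a b c e : R) : 0 <= c -> c < e -> e <= 1 ->
  (0 < \int[lebesgue_measure]_(y in `]c, e[) (beta_density a b y)%:E)%E.
Proof.
move=> c0 ce e1.
pose c' := c + (e - c) / 3; pose e' := e - (e - c) / 3.
have c'0 : 0 < c' by rewrite /c'; lra.
have e'1 : 0 < 1 - e' by rewrite /e'; lra.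
have c'e' : c' < e' by rewrite /c' /e'; lra.
(* On the middle third of ]c, e[, away from 0 and 1, the density is at least m. *)
pose m := Num.min (c' `^ (a - 1)) 1 * Num.min ((1 - e') `^ (b - 1)) 1.
have m0 : 0 < m by rewrite mulr_gt0 // lt_min ltr01 andbT powR_gt0.
have m_le y : y \in `[c', e'] -> m <= beta_density a b y.
  rewrite in_itv /= => /andP[c'y ye'].
  apply: ler_pM; rewrite ?le_min ?ler01 ?powR_ge0 //.
    by apply: powR_ge_min => //; lra.
  by apply: powR_ge_min => //; lra.
apply: (@lt_le_trans _ _ (\int[lebesgue_measure]_(y in `[c', e']) m%:E)%E).
  rewrite integral_cst //= lebesgue_measure_itv /= lte_fin c'e' -EFinD -EFinM lte_fin.
  by rewrite mulr_gt0 // subr_gt0.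
apply: (@le_trans _ _
  (\int[lebesgue_measure]_(y in `[c', e']) (beta_density a b y)%:E)%E).
  apply: ge0_le_integral => //; first by move=> y _; rewrite lee_fin ltW.
  exact: measurable_funS (measurable_beta_density a b).
have sub : `[c', e'] `<=` `]c, e[.
  by move=> y /=; rewrite !in_itv /= /c' /e' => /andP[? ?]; apply/andP; split; lra.
apply: ge0_subset_integral => //.
  exact: measurable_funS (measurable_beta_density a b).
by move=> y _; rewrite lee_fin beta_density_ge0.
Qed.

End BetaDensity.

Lemma le_measure_ae d (T : measurableType d) (R : realType)
    (mu : {measure set T -> \bar R}) (A B : set T) :
  measurable A -> measurable B -> {ae mu, forall w, A w -> B w} ->
  (mu A <= mu B)%E.
Proof.
move=> mA mB [N [mN muN0 ABN]].
rewrite -(measureU0 mB mN muN0); apply: le_measure; rewrite ?inE //.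
  exact: measurableU.
move=> w Aw; have [Bw|nBw] := pselect (B w); first by left.
by right; apply: ABN => /(_ Aw).
Qed.

Lemma measurable_l1_ball_stick d (T : measurableType d) (R : realType)
    (V : nat -> T -> R) (p : nat -> R) (eps : R) :
  (forall i, measurable_fun setT (V i)) ->
  measurable [set w | (l1_dist p (stick_breaking V w) < eps%:E)%E].
Proof.
move=> mV; rewrite -[X in measurable X]setTI.
apply: measurable_lte => //; apply: ge0_emeasurable_sum => [i w _ _|i _].
  by rewrite lee_fin.
apply/measurable_EFinP.
change (measurable_fun setT
  ((fun r : R => `|r|) \o (fun w => p i - stick_breaking V w i))).
apply: measurableT_comp; first exact: normr_measurable.
apply/measurable_funB/measurable_funM; first exact: measurable_cst.
  exact: mV.
by apply: measurable_prod => l _; exact/measurable_funB/mV/measurable_cst.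
Qed.

Lemma ltr_dist_window (R : realFieldType) (y delta x : R) :
  x \in `]Num.max (y - delta) 0, Num.min (y + delta) 1[ -> `|y - x| < delta.
Proof.
rewrite in_itv /= gt_max lt_min => /andP[/andP[? _] /andP[? _]].
by rewrite ltr_norml; apply/andP; split; lra.
Qed.

Section BetaProbability.
Context d (T : measurableType d) (R : realType) (P : probability T R).

Lemma beta_law_itv_gt0 (V : T -> R) (a b c e : R) : has_beta_law P V a b ->
  0 <= c -> c < e -> e <= 1 -> (0 < P (V @^-1` `]c, e[))%E.
Proof.
move=> beta c0 ce e1.
have := beta setT measurableT; rewrite preimage_setT probability_setT setTI.
set Z := (\int[lebesgue_measure]_(y in `]0%R, 1%R[) _)%E => Z1.
have Zinv_gt0 : (0 < Z^-1)%E.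
  rewrite lt0e inve_ge0 integral_ge0 ?andbT => [|y _]; last first.
    by rewrite lee_fin beta_density_ge0.
  by apply: contra_eqN Z1 => /eqP ->; rewrite mule0 onee_eq0.
rewrite beta; last exact: measurable_itv.
rewrite setIidl; first exact/mule_gt0/Zinv_gt0/beta_integral_itv_gt0.
by move=> y /=; rewrite !in_itv /= => /andP[? ?]; apply/andP; split; lra.
Qed.

Lemma beta_law_window_gt0 (V : T -> R) (a b y delta : R) : has_beta_law P V a b ->
  y \in `[0, 1] -> 0 < delta ->
  (0 < P (V @^-1` `](Num.max (y - delta) 0)%R, (Num.min (y + delta) 1)%R[))%E.
Proof.
move=> beta; rewrite in_itv /= => /andP[? ?] ?.
apply: (beta_law_itv_gt0 beta); first by rewrite le_max lexx orbT.
  by rewrite lt_min !gt_max; apply/andP; split; apply/andP; split; lra.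
by rewrite ge_min lexx orbT.
Qed.

Lemma beta_law_itv01_ae (V : T -> R) (a b : R) : measurable_fun setT V ->
  has_beta_law P V a b -> {ae P, forall w, V w \in `]0, 1[}.
Proof.
move=> mV beta; exists (V @^-1` ~` `]0, 1[); split => //.
- rewrite -[X in measurable X]setTI; apply: mV => //.
  by apply: measurableC; exact: measurable_itv.
- have := beta _ (measurableC (measurable_itv `]0, 1[)).
  by rewrite setICl integral_set0 mul0e.
Qed.

Lemma independent_bigcap_gt0 (V : nat -> T -> R) (B : nat -> set R) (N : nat) :
  mutually_independent P V -> (forall i, measurable (B i)) ->
  (forall i, 0 < P (V i @^-1` B i))%E ->
  (0 < P (\bigcap_(i in [set` iota 0 N]) V i @^-1` B i))%E.
Proof.
move=> indep mB PB_gt0; rewrite indep ?iota_uniq //.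
by apply: (big_ind (fun y => 0 < y)%E) => //; exact: mule_gt0.
Qed.

End BetaProbability.

Theorem propositionS2 (R : realType) (d : measure_display) (T : measurableType d)
  (P : probability T R) (a b : nat -> R) (V : nat -> T -> R) :
  (forall i, 0 < a i) -> (forall i, 0 < b i) ->
  (forall i, measurable_fun setT (V i)) ->
  (forall i, has_beta_law P (V i) (a i) (b i)) ->
  mutually_independent P V ->
  forall (eps : R) (pstar : nat -> R), 0 < eps -> open_simplex pstar ->
  (0 < P [set w | (l1_dist pstar (stick_breaking V w) < eps%:E)%E])%E.
Proof.
move=> _ _ mV beta indep eps pstar eps_gt0 pstar_simplex.
have [v v01 pstarE] := open_simplex_stick pstar_simplex.
have eps4_gt0 : 0 < eps / 4 by lra.
have [N] := open_simplex_tail pstar_simplex eps4_gt0.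
rewrite pstarE sum_stick subKr => rest_lt.
pose delta := eps / (2 * N.+1%:R ^+ 2).
have delta_gt0 : 0 < delta by rewrite divr_gt0 ?mulr_gt0 ?exprn_gt0.
pose box i := `]Num.max (v i - delta) 0, Num.min (v i + delta) 1[.
pose A := \bigcap_(i in [set` iota 0 N]) V i @^-1` [set` box i].
have PA_gt0 : (0 < P A)%E.
  apply: (independent_bigcap_gt0 (B := fun i => [set` box i])) => // i.
  exact: beta_law_window_gt0 (beta i) (subset_itv_oo_cc (v01 i)) delta_gt0.
apply: lt_le_trans PA_gt0 (le_measure_ae _ _ _).
- apply: bigcap_measurableType => i _; rewrite -[X in measurable X]setTI.
  by apply: mV => //; exact: measurable_itv.
- exact: measurable_l1_ball_stick.
have V01_ae := ae_foralln (fun i => beta_law_itv01_ae (mV i) (beta i)).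
apply: filterS V01_ae => w V01 Aw /=.
change (l1_dist (stick v) (stick (V ^~ w)) < eps%:E)%E.
apply: (l1_dist_stick_lt (fun l => subset_itv_oo_cc (v01 l))
  (fun l => subset_itv_oo_cc (V01 l)) rest_lt) => l lN.
by have := Aw l; rewrite /= mem_iota lN => /(_ isT) /ltr_dist_window.
Qed.
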